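(* Let $\rho\ge1$, $P_2>0$, and for $i=1,\dots,\rho$ let $0<\alpha_i<1$ and $\beta_i>0$. For $\xi>0$ define $$\varphi_i(\xi)=\max\Big(0,\;\frac{\alpha_i}{2}-1+\sqrt{\frac{\alpha_i^2}{4}+\frac{\alpha_i}{\beta_i}\xi}\Big),\qquad i=1,\dots,\rho.$$ Then the equation $P_2=\sum_{i=1}^{\rho}\beta_i\varphi_i(\xi)$ has a unique solution $\xi>0$, and for this $\xi$ the vector $x_i=\varphi_i(\xi)$, $i=1,\dots,\rho$, is an optimal solution of the convex problem $$\min_{x_1,\dots,x_\rho}\;-\sum_{i=1}^{\rho}\ln\Big\{1-\frac{\alpha_i}{1+x_i}\Big\}\quad\text{s.t.}\quad\sum_{i=1}^{\rho}\beta_i x_i\le P_2,\ \ x_i\ge0,\ i=1,\dots,\rho.$$ *)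

From Stdlib Require Import Reals.
Open Scope R_scope.

Fixpoint rsum (n : nat) (f : nat -> R) : R :=
  match n with
  | O => 0
  | S m => rsum m f + f m
  end.

Definition varphi (alpha beta xi : R) : R :=
  Rmax 0 (alpha / 2 - 1 + sqrt (alpha ^ 2 / 4 + alpha / beta * xi)).

Definition objective (rho : nat) (alpha : nat -> R) (x : nat -> R) : R :=
  - rsum rho (fun i => ln (1 - alpha i / (1 + x i))).

Definition feasible (rho : nat) (beta : nat -> R) (P2 : R) (x : nat -> R) : Prop :=
  rsum rho (fun i => beta i * x i) <= P2 /\ (forall i, (i < rho)%nat -> 0 <= x i).

From Stdlib Require Import Reals Lra Lia Ranalysis5.
Open Scope R_scope.

(* The budget [xi |-> sum_i beta_i varphi_i(xi)] is continuous, vanishes at [0], is unbounded,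
   and is strictly increasing wherever it is positive, because each [varphi_i] is nondecreasing and
   strictly increasing where positive.  The intermediate value theorem gives a root of
   [budget = P2], unique by this monotonicity.  Optimality is the KKT argument with multiplier
   [1 / xi]: [varphi_i(xi)] is the point where the derivative of the concave function
   [y |-> ln (1 - alpha_i / (1 + y))] equals [beta_i / xi], or [0] if that derivative is already
   at most [beta_i / xi] at [y = 0]; so the tangent-line bounds, summed over [i], reduce the
   comparison of objectives to the budget constraint. *)

Lemma rsum_le n f g :
  (forall i, (i < n)%nat -> f i <= g i) -> rsum n f <= rsum n g.
Proof.
  induction n as [|n IH]; simpl; intros Hfg; [lra|].
  assert (f n <= g n) by (apply Hfg; lia).
  assert (rsum n f <= rsum n g) by (apply IH; intros; apply Hfg; lia).
  lra.
Qed.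

Lemma rsum_eq0 n f : (forall i, (i < n)%nat -> f i = 0) -> rsum n f = 0.
Proof.
  induction n as [|n IH]; simpl; intros Hf; [reflexivity|].
  rewrite IH, (Hf n); [ring | lia | intros; apply Hf; lia].
Qed.

Lemma rsum_nonneg n f : (forall i, (i < n)%nat -> 0 <= f i) -> 0 <= rsum n f.
Proof.
  intros Hf. rewrite <- (rsum_eq0 n (fun _ => 0)) by reflexivity.
  now apply rsum_le.
Qed.

Lemma rsum_ge_term n f k :
  (forall i, (i < n)%nat -> 0 <= f i) -> (k < n)%nat -> f k <= rsum n f.
Proof.
  induction n as [|n IH]; simpl; intros Hf Hk; [lia|].
  assert (0 <= rsum n f) by (apply rsum_nonneg; intros; apply Hf; lia).
  assert (0 <= f n) by (apply Hf; lia).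
  destruct (Nat.eq_dec k n) as [->|Hkn]; [lra|].
  assert (f k <= rsum n f) by (apply IH; [intros; apply Hf|]; lia).
  lra.
Qed.

Lemma rsum_lt n f g :
  (forall i, (i < n)%nat -> 0 <= f i <= g i) ->
  (forall i, (i < n)%nat -> 0 < f i -> f i < g i) ->
  0 < rsum n f -> rsum n f < rsum n g.
Proof.
  induction n as [|n IH]; simpl; intros Hle Hlt Hpos; [lra|].
  assert (0 <= f n <= g n) by (apply Hle; lia).
  assert (0 <= rsum n f) by (apply rsum_nonneg; intros; apply Hle; lia).
  destruct (Rle_lt_or_eq_dec 0 (rsum n f) ltac:(lra)) as [Hn|Hn].
  - assert (rsum n f < rsum n g) by (apply IH; [intros; apply Hle | intros; apply Hlt | ]; auto; lia).
    lra.
  - assert (rsum n f <= rsum n g) by (apply rsum_le; intros; apply Hle; lia).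
    assert (f n < g n) by (apply Hlt; [lia | lra]).
    lra.
Qed.

Lemma rsum_plus n f g : rsum n (fun i => f i + g i) = rsum n f + rsum n g.
Proof. induction n as [|n IH]; simpl; [ring | rewrite IH; ring]. Qed.

Lemma rsum_minus n f g : rsum n (fun i => f i - g i) = rsum n f - rsum n g.
Proof. induction n as [|n IH]; simpl; [ring | rewrite IH; ring]. Qed.

Lemma rsum_scal n k f : rsum n (fun i => k * f i) = k * rsum n f.
Proof. induction n as [|n IH]; simpl; [ring | rewrite IH; ring]. Qed.

Lemma rsum_continuity_pt n (f : nat -> R -> R) t :
  (forall i, (i < n)%nat -> continuity_pt (f i) t) ->
  continuity_pt (fun s => rsum n (fun i => f i s)) t.
Proof.
  induction n as [|n IH]; simpl; intros Hf.
  - now apply continuity_pt_const.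
  - apply (continuity_pt_plus (fun s => rsum n (fun i => f i s)) (f n)).
    + apply IH; intros; apply Hf; lia.
    + apply Hf; lia.
Qed.

Lemma Rmax0_continuity_pt t : continuity_pt (Rmax 0) t.
Proof.
  apply (continuity_pt_locally_ext (fun s => (s + Rabs s) / 2) _ 1); [lra | |].
  - intros s _. unfold Rmax, Rabs. destruct Rle_dec, Rcase_abs; lra.
  - apply (continuity_pt_mult (fun s => s + Rabs s) (fun _ => / 2)).
    + apply (continuity_pt_plus id Rabs); [apply derivable_continuous_pt, derivable_pt_id | apply Rcontinuity_abs].
    + now apply continuity_pt_const.
Qed.

Lemma ln_le_sub_1 t : 0 < t -> ln t <= t - 1.
Proof.
  intros Ht. pose proof (exp_ineq1_le (ln t)) as He.
  rewrite exp_ln in He; lra.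
Qed.

(* [t |-> ln (1 - a / t)] is concave on [(a, +oo)], with derivative [a / (t (t - a))]. *)
Lemma ln_one_sub_div_tangent a u v :
  0 <= a -> a < u -> a < v ->
  ln (1 - a / v) <= ln (1 - a / u) + a / (u * (u - a)) * (v - u).
Proof.
  intros Ha Hu Hv.
  set (q := a * (v - u) / (v * (u - a))).
  assert (Hv1 : 0 < 1 - a / v) by (replace (1 - a / v) with ((v - a) / v) by (field; lra);
    apply Rdiv_lt_0_compat; lra).
  assert (Hu1 : 0 < 1 - a / u) by (replace (1 - a / u) with ((u - a) / u) by (field; lra);
    apply Rdiv_lt_0_compat; lra).
  assert (Hsplit : 1 - a / v = (1 - a / u) * (1 + q)) by (unfold q; field; lra).
  assert (Hq : 0 < 1 + q) by nra.
  assert (Hgap : a / (u * (u - a)) * (v - u) - q = a * (v - u) ^ 2 / (u * v * (u - a)))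
    by (unfold q; field; lra).
  assert (0 <= a * (v - u) ^ 2 / (u * v * (u - a))).
  { apply Rle_mult_inv_pos; [apply Rmult_le_pos; [lra | apply pow2_ge_0] |]; apply Rmult_lt_0_compat; [apply Rmult_lt_0_compat|]; lra. }
  pose proof (ln_le_sub_1 _ Hq).
  rewrite Hsplit, ln_mult by assumption.
  lra.
Qed.

Lemma Rmax_0_pos e : 0 < Rmax 0 e -> Rmax 0 e = e.
Proof. unfold Rmax; destruct Rle_dec; lra. Qed.

Section Varphi.

Variables a b : R.
Hypothesis Ha : 0 < a < 1.
Hypothesis Hb : 0 < b.

Let root_arg t := a ^ 2 / 4 + a / b * t.

Lemma root_arg_nonneg t : 0 <= t -> 0 <= root_arg t.
Proof.
  intros Ht. unfold root_arg.
  assert (0 <= a / b * t) by (apply Rmult_le_pos; [apply Rlt_le, Rdiv_lt_0_compat |]; lra).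
  nra.
Qed.

Lemma varphi_nonneg t : 0 <= varphi a b t.
Proof. apply Rmax_l. Qed.

Lemma varphi_0 : varphi a b 0 = 0.
Proof.
  unfold varphi. rewrite Rmult_0_r, Rplus_0_r.
  replace (a ^ 2 / 4) with ((a / 2) * (a / 2)) by field.
  rewrite sqrt_square by lra.
  apply Rmax_left; lra.
Qed.

Lemma varphi_le t1 t2 : 0 <= t1 <= t2 -> varphi a b t1 <= varphi a b t2.
Proof.
  intros Ht. apply Rle_max_compat_l, Rplus_le_compat_l, sqrt_le_1_alt, Rplus_le_compat_l.
  apply Rmult_le_compat_l; [apply Rlt_le, Rdiv_lt_0_compat |]; lra.
Qed.

Lemma varphi_lt t1 t2 :
  0 <= t1 < t2 -> 0 < varphi a b t1 -> varphi a b t1 < varphi a b t2.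
Proof.
  unfold varphi. intros Ht Hpos.
  rewrite (Rmax_0_pos _ Hpos).
  eapply Rlt_le_trans; [| apply Rmax_r].
  apply Rplus_lt_compat_l, sqrt_lt_1_alt. split; [apply root_arg_nonneg; lra |].
  apply Rplus_lt_compat_l, Rmult_lt_compat_l; [apply Rdiv_lt_0_compat |]; lra.
Qed.

Lemma varphi_unbounded M : exists t, 0 < t /\ M < varphi a b t.
Proof.
  set (m := Rabs M + 1).
  assert (Hm : 0 < m) by (unfold m; pose proof (Rabs_pos M); lra).
  exists (b / a * (m * m)). split.
  - apply Rmult_lt_0_compat; [apply Rdiv_lt_0_compat |]; nra.
  - assert (m <= sqrt (a ^ 2 / 4 + a / b * (b / a * (m * m)))).
    { replace (a / b * (b / a * (m * m))) with (m * m) by (field; lra).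
      rewrite <- (sqrt_square m) at 1 by lra.
      apply sqrt_le_1_alt. nra. }
    pose proof (Rle_abs M).
    unfold varphi. eapply Rlt_le_trans; [| apply Rmax_r].
    unfold m in *. lra.
Qed.

Lemma varphi_continuity_pt t : 0 <= t -> continuity_pt (varphi a b) t.
Proof.
  intros Ht. unfold varphi.
  apply (continuity_pt_comp (fun s => a / 2 - 1 + sqrt (root_arg s)) (Rmax 0));
    [| apply Rmax0_continuity_pt].
  apply (continuity_pt_plus (fun _ => a / 2 - 1) (fun s => sqrt (root_arg s)));
    [now apply continuity_pt_const |].
  apply (continuity_pt_comp root_arg sqrt); [| now apply continuity_pt_sqrt, root_arg_nonneg].
  apply (continuity_pt_plus (fun _ => a ^ 2 / 4) (fun s => a / b * s));
    [now apply continuity_pt_const |].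
  apply (continuity_pt_mult (fun _ => a / b) id);
    [now apply continuity_pt_const | apply derivable_continuous_pt, derivable_pt_id].
Qed.

Lemma varphi_pos_stationary t :
  0 <= t -> 0 < varphi a b t ->
  (1 + varphi a b t) * (1 + varphi a b t - a) = a / b * t.
Proof.
  intros Ht Hpos. pose proof (sqrt_sqrt _ (root_arg_nonneg t Ht)) as Hs.
  unfold varphi. rewrite (Rmax_0_pos _ Hpos). unfold root_arg in Hs.
  set (s := sqrt (a ^ 2 / 4 + a / b * t)) in *.
  transitivity (s * s - a ^ 2 / 4); [field | rewrite Hs; ring].
Qed.

Lemma varphi_eq0_bound t : 0 <= t -> varphi a b t = 0 -> a / b * t <= 1 - a.
Proof.
  intros Ht H0. pose proof (sqrt_sqrt _ (root_arg_nonneg t Ht)) as Hs.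
  unfold varphi in H0. unfold root_arg in Hs.
  pose proof (Rmax_r 0 (a / 2 - 1 + sqrt (a ^ 2 / 4 + a / b * t))) as He.
  rewrite H0 in He.
  pose proof (sqrt_pos (a ^ 2 / 4 + a / b * t)).
  nra.
Qed.

(* KKT at [x = varphi a b xi]: the slope [a / ((1 + x) (1 + x - a))] equals [b / xi] if [x > 0]
   and is at most [b / xi] if [x = 0]. *)
Lemma ln_one_sub_div_le_at_varphi xi y :
  0 < xi -> 0 <= y ->
  ln (1 - a / (1 + y)) <=
  ln (1 - a / (1 + varphi a b xi)) + / xi * (b * y - b * varphi a b xi).
Proof.
  intros Hxi Hy.
  pose proof (varphi_nonneg xi) as Hx0. set (x := varphi a b xi) in *.
  pose proof (ln_one_sub_div_tangent a (1 + x) (1 + y) ltac:(lra) ltac:(lra) ltac:(lra)).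
  enough (a / ((1 + x) * (1 + x - a)) * ((1 + y) - (1 + x)) <= / xi * (b * y - b * x)) by lra.
  destruct (Rle_lt_or_eq_dec 0 x Hx0) as [Hx | Hx].
  - unfold x. rewrite varphi_pos_stationary; [| lra | exact Hx].
    right. field. lra.
  - rewrite <- Hx.
    assert (Hbound : a * xi <= b * (1 - a)).
    { pose proof (varphi_eq0_bound xi ltac:(lra) (eq_sym Hx)).
      replace (a * xi) with (a / b * xi * b) by (field; lra). nra. }
    assert (Hgap : / xi * (b * y - b * 0) - a / ((1 + 0) * (1 + 0 - a)) * (1 + y - (1 + 0))
                   = y * (b * (1 - a) - a * xi) / ((1 - a) * xi)) by (field; lra).
    assert (0 <= y * (b * (1 - a) - a * xi) / ((1 - a) * xi)).
    { apply Rle_mult_inv_pos; [apply Rmult_le_pos |]; nra. }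
    lra.
Qed.

End Varphi.

Section Budget.

Variable rho : nat.
Variables alpha beta : nat -> R.
Hypothesis Halpha : forall i, (i < rho)%nat -> 0 < alpha i < 1.
Hypothesis Hbeta : forall i, (i < rho)%nat -> 0 < beta i.

Definition budget (xi : R) : R := rsum rho (fun i => beta i * varphi (alpha i) (beta i) xi).

Lemma budget_0 : budget 0 = 0.
Proof.
  apply rsum_eq0. intros i Hi.
  rewrite varphi_0 by (apply Halpha; exact Hi). ring.
Qed.

Lemma budget_continuity_pt t : 0 <= t -> continuity_pt budget t.
Proof.
  intros Ht. apply (rsum_continuity_pt rho (fun i s => beta i * varphi (alpha i) (beta i) s)).
  intros i Hi. destruct (Halpha i Hi).
  apply (continuity_pt_mult (fun _ => beta i)); [now apply continuity_pt_const |].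
  apply varphi_continuity_pt; auto.
Qed.

Lemma budget_lt t1 t2 : 0 <= t1 < t2 -> 0 < budget t1 -> budget t1 < budget t2.
Proof.
  intros Ht. apply rsum_lt; intros i Hi; destruct (Halpha i Hi); pose proof (Hbeta i Hi).
  - pose proof (varphi_nonneg (alpha i) (beta i) t1).
    pose proof (varphi_le (alpha i) (beta i) ltac:(lra) ltac:(lra) t1 t2 ltac:(lra)).
    split; [| apply Rmult_le_compat_l]; nra.
  - intros Hpos. apply Rmult_lt_compat_l; [lra |].
    apply varphi_lt; [lra | lra | lra | nra].
Qed.

Lemma budget_inj t1 t2 :
  0 <= t1 -> 0 <= t2 -> 0 < budget t1 -> budget t1 = budget t2 -> t1 = t2.
Proof.
  intros Ht1 Ht2 Hpos Heq.
  destruct (Rtotal_order t1 t2) as [Hlt | [Heq12 | Hgt]]; [| exact Heq12 |].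
  - pose proof (budget_lt t1 t2 ltac:(lra) Hpos). lra.
  - pose proof (budget_lt t2 t1 ltac:(lra) ltac:(lra)). lra.
Qed.

Lemma budget_unbounded M : (0 < rho)%nat -> exists t, 0 < t /\ M < budget t.
Proof.
  intros Hrho. pose proof (Halpha 0%nat Hrho). pose proof (Hbeta 0%nat Hrho) as Hb0.
  destruct (varphi_unbounded (alpha 0%nat) (beta 0%nat) ltac:(lra) ltac:(lra) (M / beta 0%nat))
    as [t [Ht HM]].
  exists t. split; [exact Ht |].
  assert (beta 0%nat * varphi (alpha 0%nat) (beta 0%nat) t <= budget t).
  { apply (rsum_ge_term rho (fun i => beta i * varphi (alpha i) (beta i) t)); [| exact Hrho].
    intros i Hi. apply Rmult_le_pos; [apply Rlt_le, Hbeta, Hi | apply varphi_nonneg]. }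
  assert (M = beta 0%nat * (M / beta 0%nat)) by (field; lra).
  nra.
Qed.

Lemma budget_attains P : (0 < rho)%nat -> 0 < P -> exists xi, 0 < xi /\ budget xi = P.
Proof.
  intros Hrho HP. destruct (budget_unbounded P Hrho) as [X [HX HPX]].
  destruct (IVT_interv (fun t => budget t - P) 0 X) as [xi [Hxi Hroot]].
  - intros t Ht. apply (continuity_pt_minus budget (fun _ => P));
      [apply budget_continuity_pt; lra | now apply continuity_pt_const].
  - exact HX.
  - rewrite budget_0. lra.
  - lra.
  - exists xi. assert (budget xi = P) by lra. split; [| assumption].
    destruct (Rle_lt_or_eq_dec 0 xi ltac:(lra)) as [| <-]; [assumption |].
    rewrite budget_0 in *. lra.
Qed.

Lemma varphi_feasible xi :
  feasible rho beta (budget xi) (fun i => varphi (alpha i) (beta i) xi).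
Proof. split; [apply Rle_refl | intros; apply varphi_nonneg]. Qed.

Lemma varphi_minimizes_objective xi y :
  0 < xi -> feasible rho beta (budget xi) y ->
  objective rho alpha (fun i => varphi (alpha i) (beta i) xi) <= objective rho alpha y.
Proof.
  intros Hxi [Hy Hy0]. unfold objective. apply Ropp_le_contravar.
  set (x := fun i => varphi (alpha i) (beta i) xi).
  eapply Rle_trans.
  - apply (rsum_le rho _
      (fun i => ln (1 - alpha i / (1 + x i)) + / xi * (beta i * y i - beta i * x i))).
    intros i Hi. destruct (Halpha i Hi).
    apply ln_one_sub_div_le_at_varphi; [lra | apply Hbeta | | apply Hy0]; assumption.
  - rewrite rsum_plus, rsum_scal, rsum_minus.
    assert (0 <= / xi * (budget xi - rsum rho (fun i => beta i * y i))).
    { apply Rmult_le_pos; [apply Rlt_le, Rinv_0_lt_compat |]; lra. }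
    change (rsum rho (fun i => beta i * x i)) with (budget xi).
    unfold x; cbv beta. lra.
Qed.

End Budget.

Theorem mainTheorem3 (rho : nat) (P2 : R) (alpha beta : nat -> R)
  (Hrho : (1 <= rho)%nat) (HP2 : 0 < P2)
  (Halpha : forall i, (i < rho)%nat -> 0 < alpha i < 1)
  (Hbeta : forall i, (i < rho)%nat -> 0 < beta i) :
  exists xi : R,
    (0 < xi /\ P2 = rsum rho (fun i => beta i * varphi (alpha i) (beta i) xi)) /\
    (forall xi' : R, 0 < xi' ->
       P2 = rsum rho (fun i => beta i * varphi (alpha i) (beta i) xi') -> xi' = xi) /\
    (let x := fun i => varphi (alpha i) (beta i) xi in
     feasible rho beta P2 x /\
     forall y : nat -> R, feasible rho beta P2 y -> objective rho alpha x <= objective rho alpha y).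
Proof.
  destruct (budget_attains rho alpha beta Halpha Hbeta P2 Hrho HP2) as [xi [Hxi Hbudget]].
  exists xi. split; [split; [exact Hxi | symmetry; exact Hbudget] | split].
  - intros xi' Hxi' Hbudget'. fold (budget rho alpha beta xi') in Hbudget'.
    apply (budget_inj rho alpha beta Halpha Hbeta); lra.
  - intros x. rewrite <- Hbudget. split.
    + apply varphi_feasible.
    + intros y. apply varphi_minimizes_objective; assumption.
Qed.
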